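(* Let $n$ be a positive integer and let $G$ be any graph with at most $n$ vertices. Then $\chi_{td}(G) \leq 3^{\lceil \log_2 n\rceil}$.
   Context: All graphs are simple. For a graph $G$ and a positive integer $k$, a proper $k$-total difference labeling of $G$ is a function $f: V(G)\to\{1,\dots,k\}$, extended to edges by $f(\{u,v\}) = |f(u)-f(v)|$, such that: (i) adjacent vertices receive different labels; (ii) two distinct edges sharing a vertex receive different labels; (iii) no edge receives the same label as either of its endpoints; and all edge labels lie in $\{1,\dots,k\}$. $\chi_{td}(G)$ denotes the smallest $k$ for which $G$ has a proper $k$-total difference labeling. *)

From mathcomp Require Import all_boot.
Set Implicit Arguments. Unset Strict Implicit. Unset Printing Implicit Defensive.

Definition simple_graph (T : finType) (e : rel T) : Prop :=
  symmetric e /\ irreflexive e.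

Definition edge_label (T : Type) (f : T -> nat) (u v : T) : nat :=
  (f u - f v) + (f v - f u).

Definition proper_total_diff_labeling (T : finType) (e : rel T) (k : nat)
    (f : T -> nat) : Prop :=
  (forall v, 1 <= f v <= k) /\
  (forall u v, e u v -> f u != f v) /\
  (forall u v w, e u v -> e u w -> v != w -> edge_label f u v != edge_label f u w) /\
  (forall u v, e u v -> edge_label f u v != f u /\ edge_label f u v != f v) /\
  (forall u v, e u v -> 1 <= edge_label f u v <= k).

(* chi_td(G) <= K : the least k admitting a proper k-total difference labeling
   is at most K, i.e. some k <= K admits one. *)
Definition chi_td_le (T : finType) (e : rel T) (K : nat) : Prop :=
  exists k, k <= K /\ exists f : T -> nat, proper_total_diff_labeling e k f.

From mathcomp Require Import all_boot.
From mathcomp Require Import zify.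

Set Implicit Arguments.
Unset Strict Implicit.
Unset Printing Implicit Defensive.

(* Reading the binary digits of i < 2^m in base 3 gives numbers below 3^m
   without non-trivial 3-term arithmetic progressions (compare the lowest
   ternary digit, which is 0 or 1, and recurse).  Numbering the vertices
   injectively by i < 2^m and labelling vertex v by 2 t(v) + 1, where t(v) is
   this ternary reading, every edge label is even, hence differs from the
   odd vertex labels, and two edges uv, uw with the same label would force
   f v + f w = 2 f u, a non-trivial progression. *)

Definition progression_free (T : Type) (g : T -> nat) : Prop :=
  forall u v w, g u + g w = 2 * g v -> u = v.

Lemma progression_free_inj (T : Type) (g : T -> nat) :
  progression_free g -> injective g.
Proof. by move=> g_pf u v guv; apply: (g_pf u v u); lia. Qed.

Section ProgressionFreeLabeling.

Variables (T : finType) (e : rel T) (k : nat) (g : T -> nat).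
Hypotheses (e_simple : simple_graph e) (g_pf : progression_free g)
  (g_lt : forall v, 2 * g v < k).

Let f (v : T) : nat := 2 * g v + 1.

Lemma edge_neq u v : e u v -> u != v.
Proof. by case: e_simple => _ e_irr; apply: contraTneq => ->; rewrite e_irr. Qed.

Lemma progression_free_label_neq u v : e u v -> f u != f v.
Proof.
move=> euv; apply: contraNneq (edge_neq euv) => fuv.
by apply/eqP/(progression_free_inj g_pf); rewrite /f in fuv; lia.
Qed.

Lemma progression_free_labeling : proper_total_diff_labeling e k f.
Proof.
rewrite /proper_total_diff_labeling /edge_label.
split; first by move=> v; have := g_lt v; rewrite /f; lia.
split; first exact: progression_free_label_neq.
split.
  move=> u v w euv euw; apply: contraNneq => labels_eq.
  have [gvw | g_prog] : g v = g w \/ g v + g w = 2 * g u by rewrite /f in labels_eq; lia.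
    by apply/eqP/(progression_free_inj g_pf).
  by move: (edge_neq euv); rewrite (g_pf g_prog) eqxx.
split; first by move=> u v _; rewrite /f; split; apply/eqP; lia.
move=> u v euv; have /eqP := progression_free_label_neq euv.
by have := g_lt u; have := g_lt v; rewrite /f; lia.
Qed.

End ProgressionFreeLabeling.

Fixpoint ternary_of_binary (m i : nat) : nat :=
  if m is m'.+1 then i %% 2 + 3 * ternary_of_binary m' (i %/ 2) else 0.

Lemma ternary_of_binary_lt m i : 2 * ternary_of_binary m i < 3 ^ m.
Proof. by elim: m i => [|m IHm] i //=; have := IHm (i %/ 2); rewrite expnS; lia. Qed.

Lemma ternary_of_binary_progression_free m a b c :
  a < 2 ^ m -> b < 2 ^ m -> c < 2 ^ m ->
  ternary_of_binary m a + ternary_of_binary m c = 2 * ternary_of_binary m b ->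
  a = b.
Proof.
elim: m a b c => [|m IHm] a b c /=; first by rewrite expn0; lia.
rewrite expnS => a_lt b_lt c_lt prog.
have high_eq : a %/ 2 = b %/ 2 by apply: (IHm _ _ (c %/ 2)); lia.
lia.
Qed.

Theorem mainTheorem1 (n : nat) (T : finType) (e : rel T) :
  0 < n -> simple_graph e -> #|T| <= n ->
  chi_td_le e (3 ^ up_log 2 n).
Proof.
move=> _ e_simple T_le_n; set m := up_log 2 n.
have rank_lt (v : T) : enum_rank v < 2 ^ m.
  exact: leq_trans (ltn_ord _) (leq_trans T_le_n (up_logP _ _)).
pose g (v : T) := ternary_of_binary m (enum_rank v).
have g_pf : progression_free g.
  move=> u v w /ternary_of_binary_progression_free uv.
  exact/enum_rank_inj/ord_inj/uv.
exists (3 ^ m); split => //; eexists.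
exact: progression_free_labeling e_simple g_pf (fun v => ternary_of_binary_lt m _).
Qed.
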